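(* There cannot be two finalized checkpoints on different (conflicting) chains. That is, if checkpoints $C$ and $C'$ are both finalized, then the block of one is an ancestor of (or equal to) the block of the other.
   Context: System: $n$ validators, each with equal stake, of which $f<n/3$ are Byzantine; the validator set is fixed between finalized checkpoints. Blocks form a tree rooted at the genesis block, and a chain is a path from the genesis block. A checkpoint is a pair $(b,e)$, where $b$ is the block of the first slot of epoch $e$ on the chain. A checkpoint vote is a signed pair, source $(a,e_a)$ and target $(b,e_b)$, with $e_a<e_b$. A supermajority link $(a,e_a)\to(b,e_b)$ exists when more than $2/3$ of the validators cast that checkpoint vote. A checkpoint is justified if it is the target of a supermajority link; the genesis checkpoint is justified. A checkpoint $(a,e_a)$ is finalized if: - it is justified; - there is a supermajority link $(a,e_a)\to(b,e_b)$ with $e_b-e_a\le 2$; - if $e_b-e_a=2$, the checkpoint at epoch $e_a+1$ on that chain is justified. Honest validators follow these rules: - each casts at most one checkpoint vote per epoch; - the source is the justified checkpoint with the highest epoch in its view; - the target is the current epoch's checkpoint on the candidate chain, selected by a fork choice rule that only follows chains extending the block of that highest justified checkpoint. *)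

(* Model of Casper FFG / Gasper checkpoint finality. *)
From mathcomp Require Import all_boot.
Set Implicit Arguments.
Unset Strict Implicit.
Unset Printing Implicit Defensive.

Record blocktree := BlockTree {
  Block :> Type;
  genesis : Block;
  parent : Block -> Block;
  slot : Block -> nat;
  parent_genesis : parent genesis = genesis;
  slot_genesis : slot genesis = 0;
  slot_parent : forall b, b <> genesis -> slot (parent b) < slot b;
  rooted : forall b, exists k, iter k parent b = genesis
}.

Section Model.
Variable T : blocktree.
Variable spe : nat. (* slots per epoch; first slot of epoch e is e * spe *)

Definition ancestor (a b : T) : Prop := exists k, iter k (@parent T) b = a.

(* [b] is the block of the first slot of epoch [e] on the chain ending at [h]:
   the latest block of that chain whose slot is <= e * spe. *)
Definition checkpoint_block (h : T) (e : nat) (b : T) : Prop :=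
  [/\ ancestor b h, slot b <= e * spe &
      forall c, ancestor c h -> slot c <= e * spe -> ancestor c b].

Definition checkpoint := (Block T * nat)%type.

Record vote := Vote { src : checkpoint; tgt : checkpoint }.

Variable V : finType. (* validators, equal stake *)

Definition sm_link (votes : V -> vote -> Prop) (s t : checkpoint) : Prop :=
  s.2 < t.2 /\
  exists S : {set V}, 2 * #|V| < 3 * #|S| /\
    forall v, v \in S -> votes v (Vote s t).

Inductive justified (votes : V -> vote -> Prop) : checkpoint -> Prop :=
| justified_genesis : justified votes (genesis T, 0)
| justified_link s t :
    justified votes s -> sm_link votes s t -> justified votes t.

Definition finalized (votes : V -> vote -> Prop) (c : checkpoint) : Prop :=
  justified votes c /\
  exists b eb, sm_link votes c (b, eb) /\ eb - c.2 <= 2 /\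
    (eb - c.2 = 2 ->
       exists m, checkpoint_block b c.2.+1 m /\ justified votes (m, c.2.+1)).

(* [cast v x]: validator v cast vote x.
   [view v e w x]: in the view of validator v when voting in epoch e,
   validator w has cast vote x. *)
Definition honest (cast : V -> vote -> Prop)
    (view : V -> nat -> V -> vote -> Prop) (v : V) : Prop :=
  [/\ (* views only contain votes really cast (signatures) *)
      (forall e w x, view v e w x -> cast w x),
      (forall e1 e2 w x, e1 <= e2 -> view v e1 w x -> view v e2 w x),
      (forall x y, cast v x -> cast v y -> (tgt x).2 = (tgt y).2 -> x = y) &
      (* each vote, cast in epoch e := target epoch, follows the rules *)
      (forall x, cast v x ->
         let e := (tgt x).2 in
         [/\ (src x).2 < e,
             justified (view v e) (src x),
             (forall c, justified (view v e) c -> c.2 <= (src x).2) &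
             exists h, ancestor (src x).1 h /\
                       checkpoint_block h e (tgt x).1])].

End Model.

From mathcomp Require Import all_boot.
From mathcomp Require Import zify.
Set Implicit Arguments.
Unset Strict Implicit.

(* The proof shows that every justified checkpoint t with t.2 >= c.2 lies on
   the chain of a finalized checkpoint c; the theorem follows by comparing
   the epochs of the two finalized checkpoints.  The ingredients are:
   - quorum intersection: two supermajorities share an honest validator;
   - hence justified checkpoints have a unique checkpoint per epoch, and an
     honest vote shows the target of a link descends from its source;
   - view growth: once an honest validator has voted from source c, every
     later vote of it has a source of epoch >= c.2.
   The descent property is then proved by induction on the justification of
   t: epochs up to the finalizing link's target are covered by uniqueness
   (together with the justified intermediate checkpoint in the 2-epoch
   case), and later epochs by the induction hypothesis applied to the
   source of t's justifying link. *)

Lemma ancestor_refl (T : blocktree) (a : T) : ancestor a a.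
Proof. by exists 0. Qed.

Lemma ancestor_trans (T : blocktree) (a b c : T) :
  ancestor a b -> ancestor b c -> ancestor a c.
Proof. by move=> [k Hk] [j Hj]; exists (k + j); rewrite iterD Hj. Qed.

Lemma checkpoint_block_above (T : blocktree) (spe e : nat) (a h m : T) :
  checkpoint_block spe h e m -> ancestor a h -> slot a <= e * spe ->
  ancestor a m.
Proof. by case=> _ _; apply. Qed.

Lemma quorum_intersection (V : finType) (byz S1 S2 : {set V}) :
  3 * #|byz| < #|V| -> 2 * #|V| < 3 * #|S1| -> 2 * #|V| < 3 * #|S2| ->
  exists v, [/\ v \in S1, v \in S2 & v \notin byz].
Proof.
move=> Hbyz H1 H2.
have Hbig : #|byz| < #|S1 :&: S2|.
  by have := cardsUI S1 S2; have := max_card (S1 :|: S2); lia.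
have /subsetPn [v] : ~~ (S1 :&: S2 \subset byz).
  by apply/negP => /subset_leq_card; lia.
by rewrite inE => /andP [v1 v2] vb; exists v.
Qed.

Lemma justified_mono (T : blocktree) (V : finType)
    (votes1 votes2 : V -> vote T -> Prop) (t : checkpoint T) :
  (forall w x, votes1 w x -> votes2 w x) ->
  justified votes1 t -> justified votes2 t.
Proof.
move=> Hsub; elim=> [|s t' _ IH [Hlt [S [HS HSv]]]]; first exact: justified_genesis.
apply: justified_link IH _; split=> //; exists S; split=> // w Hw.
exact/Hsub/HSv.
Qed.

Section HonestMajority.

Variables (T : blocktree) (spe : nat) (V : finType) (byz : {set V}).
Variables (cast : V -> vote T -> Prop) (view : V -> nat -> V -> vote T -> Prop).
Hypothesis byz_minority : 3 * #|byz| < #|V|.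
Hypothesis honest_rest : forall v, v \notin byz -> honest spe cast view v.

Lemma link_honest_voter (s t : checkpoint T) :
  sm_link cast s t -> exists2 v, v \notin byz & cast v (Vote s t).
Proof.
case=> _ [S [HS HSv]].
have [v [vS _ vh]] := quorum_intersection byz_minority HS HS.
by exists v => //; apply: HSv.
Qed.

(* Two links with targets in the same epoch share an honest voter, who votes
   at most once per epoch: the targets coincide. *)
Lemma justified_unique (t t' : checkpoint T) :
  justified cast t -> justified cast t' -> t.2 = t'.2 -> t = t'.
Proof.
case=> [|s t0 _ [Hlt [S [HS HSv]]]];
case=> [|s' t1 _ [Hlt' [S' [HS' HSv']]]] //= He; try lia.
have [v [vS vS' vh]] := quorum_intersection byz_minority HS HS'.
have [_ _ one_per_epoch _] := honest_rest vh.
by case: (one_per_epoch _ _ (HSv v vS) (HSv' v vS') He).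
Qed.

Lemma justified_slot (t : checkpoint T) :
  justified cast t -> slot t.1 <= t.2 * spe.
Proof.
case=> [|s t0 _ Hlink]; first by rewrite /= slot_genesis.
have [v vh Hv] := link_honest_voter Hlink.
have [_ _ _ Hrules] := honest_rest vh.
by have [_ _ _ [h [_ [_ ?]]]] := Hrules _ Hv.
Qed.

(* The target of a link from a justified source lies on the source's chain:
   an honest voter picked the target on a chain extending the source block,
   and the source block is old enough to precede the target epoch. *)
Lemma link_target_descends (s t : checkpoint T) :
  justified cast s -> sm_link cast s t -> ancestor s.1 t.1.
Proof.
move=> Js Hlink; have Hlt := Hlink.1.
have [v vh Hv] := link_honest_voter Hlink.
have [_ _ _ Hrules] := honest_rest vh.
have [_ _ _ [h [Hsh Ht]]] := Hrules _ Hv.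
apply: checkpoint_block_above Ht Hsh _.
exact: leq_trans (justified_slot Js) (leq_mul (ltnW Hlt) (leqnn spe)).
Qed.

(* An honest validator voting for both links sees, at the later epoch, the
   source of the earlier vote as justified; so the later source is at least
   as high. *)
Lemma later_source_above (c s : checkpoint T) (b : T) (eb : nat)
    (t : checkpoint T) :
  sm_link cast c (b, eb) -> sm_link cast s t -> eb < t.2 -> c.2 <= s.2.
Proof.
move=> [_ [S [HS HSv]]] [_ [S' [HS' HSv']]] Hep.
have [v [vS vS' vh]] := quorum_intersection byz_minority HS HS'.
have [_ view_grows _ Hrules] := honest_rest vh.
have [_ Jc _ _] := Hrules _ (HSv v vS).
have [_ _ source_max _] := Hrules _ (HSv' v vS').
apply: source_max; apply: justified_mono Jc => w x /=.
by apply: view_grows; apply: ltnW.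
Qed.

Section Finalization.

Variables (c : checkpoint T) (b : T) (eb : nat).
Hypothesis c_justified : justified cast c.
Hypothesis c_link : sm_link cast c (b, eb).
Hypothesis c_gap : eb - c.2 <= 2.
Hypothesis c_middle : eb - c.2 = 2 ->
  exists m, checkpoint_block spe b c.2.+1 m /\ justified cast (m, c.2.+1).

(* Justified checkpoints in the epochs c.2 .. eb descend from c: they are c
   itself, the justified intermediate checkpoint, or the link target. *)
Lemma window_descends (t : checkpoint T) :
  justified cast t -> c.2 <= t.2 <= eb -> ancestor c.1 t.1.
Proof.
move=> Jt /andP [Hct Hteb]; have Hlt := c_link.1; rewrite /= in Hlt.
have Hcb : ancestor c.1 b := link_target_descends c_justified c_link.
have [Hc|Hc] := eqVneq t.2 c.2.
  by rewrite (justified_unique Jt c_justified Hc); apply: ancestor_refl.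
have [Hb|Hb] := eqVneq t.2 eb.
  by rewrite (justified_unique Jt (justified_link c_justified c_link) Hb).
have [m [Hm Jm]] : exists m, checkpoint_block spe b c.2.+1 m /\
    justified cast (m, c.2.+1) by apply: c_middle; lia.
rewrite (justified_unique Jt Jm) /=; last by lia.
apply: checkpoint_block_above Hm Hcb _.
exact: leq_trans (justified_slot c_justified) (leq_mul (leqnSn _) (leqnn spe)).
Qed.

Lemma justified_descends (t : checkpoint T) :
  justified cast t -> c.2 <= t.2 -> ancestor c.1 t.1.
Proof.
elim=> [|s t' Js IH Hlink] Hct.
  by apply: window_descends; [exact: justified_genesis | apply/andP].
have [Hteb|Hebt] := leqP t'.2 eb.
  by apply: window_descends; [exact: justified_link Js Hlink | apply/andP].
have Hcs := later_source_above c_link Hlink Hebt.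
exact: ancestor_trans (IH Hcs) (link_target_descends Js Hlink).
Qed.

End Finalization.

Lemma finalized_descends (c t : checkpoint T) :
  finalized spe cast c -> justified cast t -> c.2 <= t.2 -> ancestor c.1 t.1.
Proof.
case=> Jc [b [eb [Hlink [Hgap Hmid]]]].
exact: (justified_descends Jc Hlink Hgap Hmid).
Qed.

End HonestMajority.

Theorem mainTheorem4 (T : blocktree) (spe : nat) (V : finType)
    (byz : {set V}) (cast : V -> vote T -> Prop)
    (view : V -> nat -> V -> vote T -> Prop)
    (c c' : checkpoint T) :
  0 < spe ->
  3 * #|byz| < #|V| ->
  (forall v, v \notin byz -> honest spe cast view v) ->
  finalized spe cast c -> finalized spe cast c' ->
  ancestor c.1 c'.1 \/ ancestor c'.1 c.1.
Proof.
move=> _ Hbyz Hhonest Fc Fc'.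
have [Hle|Hlt] := leqP c.2 c'.2.
  left; exact: (finalized_descends Hbyz Hhonest Fc Fc'.1 Hle).
right; exact: (finalized_descends Hbyz Hhonest Fc' Fc.1 (ltnW Hlt)).
Qed.
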